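(* Let $R$ be a commutative Artinian ring, $M$ a non-zero $R$-module, and $M=\sum_{i=1}^n K_i$ a minimal PS-hollow representation of $M$. Suppose that every submodule of $K_i$ is PS-hollow (in $M$) for all $i\in\{1,\dots,n\}$. If $In(K_i)\cap In(K_j)=0$ for all $i\neq j$ in $\{1,\dots,n\}$, then $M=\bigoplus_{i=1}^n K_i$.
   Context: An $R$-submodule $N\leq M$ is PS-hollow iff for every ideal $I\leq R$ and every submodule $L\leq M$: $N\subseteq IM+L$ implies $N\subseteq IM$ or $N\subseteq L$. For PS-hollow $N$: $A_N=\{I\leq R: N\subseteq IM\}$, $H_N$ the set of minimal elements of $A_N$, $In(N)=\bigcap_{I\in H_N}IM$ ($=M$ if $H_N=\emptyset$); $N$ is $H$-PS-hollow iff PS-hollow with $H_N=H$. A minimal PS-hollow representation is $M=\sum_{i=1}^n K_i$ with each $K_i$ $H_i$-PS-hollow, $In(K_1),\dots,In(K_n)$ pairwise incomparable, and $K_j\not\subseteq\sum_{i\neq j}K_i$ for all $j$. *)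

From HB Require Import structures.
From mathcomp Require Import all_boot all_order all_algebra.
Set Implicit Arguments. Unset Strict Implicit. Unset Printing Implicit Defensive.
Import GRing.Theory.
Local Open Scope ring_scope.

Section PSHollow.
Variables (R : comNzRingType) (M : lmodType R).

Definition subset_pred {T : Type} (A B : T -> Prop) := forall x, A x -> B x.

Definition ideal (I : R -> Prop) : Prop :=
  [/\ I 0, (forall a b, I a -> I b -> I (a + b)) & (forall r a, I a -> I (r * a))].

Definition artinian_ring : Prop :=
  forall f : nat -> R -> Prop, (forall k, ideal (f k)) ->
    (forall k, subset_pred (f k.+1) (f k)) ->
    exists N, forall m, (N <= m)%N -> subset_pred (f N) (f m).

Definition submodule (N : M -> Prop) : Prop :=
  [/\ N 0, (forall x y, N x -> N y -> N (x + y)) & (forall a x, N x -> N (a *: x))].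

Definition idealM (I : R -> Prop) : M -> Prop :=
  fun x => exists k (a : 'I_k -> R) (m : 'I_k -> M),
    (forall t, I (a t)) /\ x = \sum_(t < k) a t *: m t.

Definition addsub (N L : M -> Prop) : M -> Prop :=
  fun x => exists y z, N y /\ L z /\ x = y + z.

Definition PS_hollow (N : M -> Prop) : Prop :=
  submodule N /\
  forall (I : R -> Prop) (L : M -> Prop), ideal I -> submodule L ->
    subset_pred N (addsub (idealM I) L) ->
    subset_pred N (idealM I) \/ subset_pred N L.

Definition A_set (N : M -> Prop) (I : R -> Prop) : Prop :=
  ideal I /\ subset_pred N (idealM I).

Definition H_set (N : M -> Prop) (I : R -> Prop) : Prop :=
  A_set N I /\ forall J, A_set N J -> subset_pred J I -> subset_pred I J.

(* In(N) = intersection of IM over I in H_N  (= M when H_N is empty) *)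
Definition In_sub (N : M -> Prop) : M -> Prop :=
  fun x => forall I, H_set N I -> idealM I x.

Definition sum_sub n (P : pred 'I_n) (K : 'I_n -> M -> Prop) : M -> Prop :=
  fun x => exists f : 'I_n -> M,
    (forall i, P i -> K i (f i)) /\ x = \sum_(i < n | P i) f i.

Definition minimal_PS_hollow_rep n (K : 'I_n -> M -> Prop) : Prop :=
  [/\ forall x : M, sum_sub predT K x,
      forall i, PS_hollow (K i),
      forall i j, i != j -> ~ subset_pred (In_sub (K i)) (In_sub (K j))
    & forall j, ~ subset_pred (K j) (sum_sub (fun i => i != j) K)].

Definition direct_sum_decomp n (K : 'I_n -> M -> Prop) : Prop :=
  (forall x : M, sum_sub predT K x) /\
  forall j x, K j x -> sum_sub (fun i => i != j) K x -> x = 0.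

End PSHollow.

(** A PS-hollow submodule [N] lying in a sum [K_1 + ... + K_m] either lies in
    some [In(K_i)] or is zero: if [N] is not inside [In(K_i)], some [I] in
    [H_{K_i}] has [N] not inside [IM], yet [N] lies in
    [IM + sum_(k <> i) K_k] because [K_i] lies in [IM]; PS-hollowness then
    removes [K_i] from the sum.  Applied to [Rx] for [x] in [K_j] and in
    [sum_(i <> j) K_i], this puts [x] in [In(K_i) ∩ In(K_j) = 0] for some
    [i <> j]. *)
From HB Require Import structures.
From mathcomp Require Import all_boot all_order all_algebra.
From Stdlib Require Import Classical.
Set Implicit Arguments. Unset Strict Implicit. Unset Printing Implicit Defensive.
Local Open Scope ring_scope.
Import GRing.Theory.

Section PSHollowSums.
Variables (R : comNzRingType) (M : lmodType R).

Definition cyclic_submodule (x : M) : M -> Prop := fun y => exists a, y = a *: x.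

Lemma submodule_cyclic x : submodule (cyclic_submodule x).
Proof.
split.
- by exists 0; rewrite scale0r.
- by move=> _ _ [a ->] [b ->]; exists (a + b); rewrite scalerDl.
- by move=> a _ [b ->]; exists (a * b); rewrite scalerA.
Qed.

Lemma cyclic_submodule_id x : cyclic_submodule x x.
Proof. by exists 1; rewrite scale1r. Qed.

Lemma cyclic_submodule_sub (N : M -> Prop) x :
  submodule N -> N x -> subset_pred (cyclic_submodule x) N.
Proof. by case=> _ _ NZ Nx _ [a ->]; apply: NZ. Qed.

Lemma sub_In_sub (N : M -> Prop) : subset_pred N (In_sub N).
Proof. by move=> x Nx I [[_ NI] _]; apply: NI. Qed.

Lemma not_sub_In_sub (N L : M -> Prop) :
  ~ subset_pred N (In_sub L) ->
  exists I, H_set L I /\ ~ subset_pred N (idealM I).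
Proof.
move=> NL; apply: NNPP => noI; apply: NL => x Nx I HI.
by apply: NNPP => Ix; apply: noI; exists I; split=> // NI; apply: Ix; apply: NI.
Qed.

Variables (n : nat) (K : 'I_n -> M -> Prop).

Lemma sum_subD1 (P : pred 'I_n) i :
  P i -> subset_pred (sum_sub P K)
           (addsub (K i) (sum_sub [pred k | P k && (k != i)] K)).
Proof.
move=> Pi _ [f [Kf ->]]; exists (f i), (\sum_(k | P k && (k != i)) f k).
split; first exact: Kf.
split; last by rewrite (bigD1 i Pi).
by exists f; split=> // k /andP[Pk _]; apply: Kf.
Qed.

Hypothesis submodule_K : forall i, submodule (K i).

Lemma submodule_sum_sub (P : pred 'I_n) : submodule (sum_sub P K).
Proof.
split.
- by exists (fun=> 0); split=> [i _|]; [case: (submodule_K i) | rewrite big1].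
- move=> _ _ [f [Kf ->]] [g [Kg ->]].
  exists (fun i => f i + g i); split; last by rewrite big_split.
  by move=> i Pi; case: (submodule_K i) => _ KD _; apply: KD; [apply: Kf | apply: Kg].
- move=> a _ [f [Kf ->]].
  exists (fun i => a *: f i); split; last by rewrite scaler_sumr.
  by move=> i Pi; case: (submodule_K i) => _ _ KZ; apply: KZ; apply: Kf.
Qed.

Lemma PS_hollow_sum_subD1 (N : M -> Prop) (P : pred 'I_n) i :
  PS_hollow N -> P i -> ~ subset_pred N (In_sub (K i)) ->
  subset_pred N (sum_sub P K) ->
  subset_pred N (sum_sub [pred k | P k && (k != i)] K).
Proof.
move=> [_ hollowN] Pi /not_sub_In_sub[I [[[idI KI] _] NI]] NP.
have NIL : subset_pred N (addsub (idealM I) (sum_sub [pred k | P k && (k != i)] K)).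
  move=> x /NP /(sum_subD1 Pi) [y [z [Ky [Lz ->]]]].
  by exists y, z; split; first exact: KI.
by case: (hollowN _ _ idI (submodule_sum_sub _) NIL).
Qed.

Lemma PS_hollow_sub_sum_sub (N : M -> Prop) (P : pred 'I_n) :
  PS_hollow N -> subset_pred N (sum_sub P K) ->
  (exists2 i, P i & subset_pred N (In_sub (K i))) \/ subset_pred N (eq^~ 0).
Proof.
move=> hollowN; move: {2}#|P| (leqnn #|P|) => m.
elim: m P => [|m IH] P lePm NP; (case: (pickP P) => [i Pi|P0];
  last by right=> x /NP [f [_ ->]]; rewrite big_pred0).
  by move: lePm; rewrite (cardD1 i P) [i \in P]Pi.
have [NIi | notNIi] := classic (subset_pred N (In_sub (K i))); first by left; exists i.
have card_lt : (#|[pred k | P k && (k != i)]| <= m)%N.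
  rewrite -ltnS (leq_trans _ lePm) // (cardD1 i P) [i \in P]Pi add1n ltnS.
  by apply/eq_leq/eq_card => k; rewrite !inE andbC.
case: (IH _ card_lt (PS_hollow_sum_subD1 hollowN Pi notNIi NP)) => [[k]|]; last by right.
by case/andP=> Pk _ NIk; left; exists k.
Qed.

End PSHollowSums.

Theorem theorem5p23 (R : comNzRingType) (M : lmodType R) (n : nat)
    (K : 'I_n -> M -> Prop) :
  artinian_ring R ->
  (exists x : M, x <> 0) ->
  minimal_PS_hollow_rep K ->
  (forall i (N : M -> Prop), submodule N -> subset_pred N (K i) -> PS_hollow N) ->
  (forall i j, i != j -> forall x, In_sub (K i) x -> In_sub (K j) x -> x = 0) ->
  direct_sum_decomp K.
Proof.
move=> _ _ [sumK hollowK _ _] hollow_subK In_disjoint.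
have submodule_K i : submodule (K i) by case: (hollowK i).
split=> // j x Kjx x_sum.
have hollow_x : PS_hollow (cyclic_submodule x).
  apply: (hollow_subK j); first exact: submodule_cyclic.
  exact: cyclic_submodule_sub.
have x_sub : subset_pred (cyclic_submodule x) (sum_sub (fun i => i != j) K).
  exact: cyclic_submodule_sub (submodule_sum_sub submodule_K _) x_sum.
case: (PS_hollow_sub_sum_sub submodule_K hollow_x x_sub) => [[i ij Ini]|x0].
- apply: (In_disjoint i j ij); first exact: Ini (cyclic_submodule_id x).
  exact: sub_In_sub.
- exact: x0 (cyclic_submodule_id x).
Qed.
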